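(* If either $m\ge 3$ and $k\ge 3$, or $m=2$ and $k\ge 4$, then the Spencer operator $\mathcal S^2\colon\operatorname{Hom}(\wedge^2V,\mathfrak a)\to\operatorname{Hom}(\wedge^3V,V)$ is injective.
   Context: $\mathfrak a=\mathfrak{sl}(2,\mathbb R)\times\mathfrak{gl}(m,\mathbb R)$ acting faithfully on $V=V_k\otimes W$, where $V_k=S^k(\mathbb R^2)$ is the irreducible $(k+1)$-dimensional $\mathfrak{sl}(2,\mathbb R)$-module and $W=\mathbb R^m$ the standard $\mathfrak{gl}(m,\mathbb R)$-module. $\mathcal S^2(\phi)(v_1\wedge v_2\wedge v_3)=-\phi(v_2\wedge v_3)v_1+\phi(v_1\wedge v_3)v_2-\phi(v_1\wedge v_2)v_3$. *)

From mathcomp Require Import all_boot all_algebra reals.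
Set Implicit Arguments. Unset Strict Implicit. Unset Printing Implicit Defensive.
Import GRing.Theory.
Local Open Scope ring_scope.

(* V_k = S^k(R^2), basis b_i = x^(k-i) y^i, i = 0..k.
   A in gl(2) acts on R^2 by A x = A00 x + A10 y, A y = A01 x + A11 y,
   and on S^k(R^2) as a derivation.  Entry (j, i) = coefficient of b_j in A.b_i. *)
Definition sym_rep {R : realType} (k : nat) (A : 'M[R]_2) : 'M[R]_(k.+1) :=
  \matrix_(j < k.+1, i < k.+1)
    (if j == i :> nat then (k - i)%:R * A 0 0 + i%:R * A 1 1
     else if j == i.+1 :> nat then (k - i)%:R * A 1 0
     else if j.+1 == i :> nat then i%:R * A 0 1
     else 0).

(* V = V_k (x) W, represented as (k+1) x m matrices: the element
   sum_{i,a} M i a * (b_i (x) e_a). *)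
Definition Vsp (R : realType) (k m : nat) := 'M[R]_(k.+1, m).

(* a = sl(2,R) x gl(m,R), carried by pairs (A, B) with tr A = 0. *)
Definition in_a {R : realType} {m : nat} (X : 'M[R]_2 * 'M[R]_m) : Prop :=
  \tr X.1 = 0.

(* the (faithful) action of (A, B) on V_k (x) W : rho_k(A) (x) 1 + 1 (x) B *)
Definition act {R : realType} {k m : nat} (X : 'M[R]_2 * 'M[R]_m)
  (v : Vsp R k m) : Vsp R k m :=
  sym_rep k X.1 *m v + v *m (X.2)^T.

Definition is_Hom2 {R : realType} {k m : nat}
  (phi : Vsp R k m -> Vsp R k m -> 'M[R]_2 * 'M[R]_m) : Prop :=
  [/\ (forall (c : R) (v1 v2 w : Vsp R k m),
          phi (c *: v1 + v2) w = c *: phi v1 w + phi v2 w),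
      (forall v w : Vsp R k m, phi v w = - phi w v) &
      (forall v w : Vsp R k m, in_a (phi v w))].

Definition spencer2 {R : realType} {k m : nat}
  (phi : Vsp R k m -> Vsp R k m -> 'M[R]_2 * 'M[R]_m)
  (v1 v2 v3 : Vsp R k m) : Vsp R k m :=
  - act (phi v2 v3) v1 + act (phi v1 v3) v2 - act (phi v1 v2) v3.

From mathcomp Require Import all_boot all_algebra reals.
From mathcomp Require Import ring lra zify.
Set Implicit Arguments. Unset Strict Implicit. Unset Printing Implicit Defensive.
Import GRing.Theory Num.Theory.
Local Open Scope ring_scope.

(* Since S^2 is linear, it suffices to show that a phi with S^2(phi) = 0
   vanishes, and by bilinearity only on pairs of basis vectors
   e_(i,a) = b_i (x) e_a.  Write X = (A, B) = phi(e_(i,a), e_(j,b)).  The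
   sl(2)-action on V_k is tridiagonal, so the two other terms of
   S^2(phi)(e_(i,a), e_(j,b), e_(l,c)) only reach coordinates (p, q) close to
   (i, a) or (j, b); at any other "free" coordinate the equation says that
   X e_(l,c) has vanishing (p, q) coordinate for all (l, c).  One free row
   kills the off-diagonal entries of A, and two free rows in one column give
   (k - p) A00 + p A11 independent of p, hence A00 = A11 = 0 since tr A = 0.
   The bounds on k and m provide two free rows, except when k = 4, a <> b and
   {i, j} = {1, 3}; there one more instance of the equation compares
   4 A00 with 4 A11.  Once all sl(2)-parts vanish, taking l outside {i, j}
   reads off B entrywise. *)

Lemma mulmx_delta_entry (R : pzSemiRingType) n1 n2 n3 (M : 'M[R]_(n1, n2))
    (l : 'I_n2) (c : 'I_n3) p q :
  (M *m delta_mx l c) p q = M p l * (q == c)%:R.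
Proof.
rewrite mxE (bigD1 l) //= big1 ?addr0; first by rewrite mxE eqxx.
by move=> j /negbTE Hj; rewrite mxE Hj mulr0.
Qed.

Lemma delta_mulmx_entry (R : pzSemiRingType) n1 n2 n3 (M : 'M[R]_(n2, n3))
    (l : 'I_n1) (c : 'I_n2) p q :
  (delta_mx l c *m M) p q = (p == l)%:R * M c q.
Proof.
rewrite mxE (bigD1 c) //= big1 ?addr0; first by rewrite mxE eqxx andbT.
by move=> j /negbTE Hj; rewrite mxE Hj andbF mul0r.
Qed.

Lemma skew_bilinear_eq0 (R : pzRingType) (U : lmodType R) n1 n2
    (f : 'M[R]_(n1, n2) -> 'M[R]_(n1, n2) -> U) :
  (forall c v1 v2 w, f (c *: v1 + v2) w = c *: f v1 w + f v2 w) ->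
  (forall v w, f v w = - f w v) ->
  (forall i a j b, f (delta_mx i a) (delta_mx j b) = 0) ->
  forall v w, f v w = 0.
Proof.
move=> f_lin f_skew f_delta.
have f0 w : f 0 w = 0.
  have := f_lin 1 0 0 w; rewrite scaler0 addr0 scale1r => f00.
  by apply: (@addrI _ (f 0 w)); rewrite addr0 -f00.
have fD w v1 v2 : f (v1 + v2) w = f v1 w + f v2 w.
  by have := f_lin 1 v1 v2 w; rewrite !scale1r.
have f_delta_eq0 w : (forall i a, f (delta_mx i a) w = 0) -> forall v, f v w = 0.
  move=> Hw v; rewrite [v]matrix_sum_delta.
  rewrite (big_morph (f^~ w) (fD w) (f0 w)) big1 // => i _.
  rewrite (big_morph (f^~ w) (fD w) (f0 w)) big1 // => j _.
  by rewrite -[_ *: _]addr0 f_lin f0 addr0 Hw scaler0.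
move=> v w; apply: (f_delta_eq0) => i a.
by rewrite f_skew f_delta_eq0 ?oppr0 // => j b; apply: f_delta.
Qed.

Lemma exists_ord_notin n (s : seq nat) : (size s < n)%N -> exists p : 'I_n, val p \notin s.
Proof.
move=> s_n; have [/allP s_iota | /allPn [p p_iota p_s]] :=
  boolP (all (mem s) (iota 0 (size s).+1)).
  by have := uniq_leq_size (iota_uniq 0 _) s_iota; rewrite size_iota ltnn.
have p_n : (p < n)%N by move: p_iota; rewrite mem_iota; lia.
by exists (Ordinal p_n).
Qed.

Lemma exists_two_ords_notin n (s : seq nat) : (size s + 2 <= n)%N ->
  exists p1 p2 : 'I_n, [/\ p1 != p2, val p1 \notin s & val p2 \notin s].
Proof.
move=> s_n; have [p1 p1_s] := @exists_ord_notin n s ltac:(lia).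
have [p2] := @exists_ord_notin n (val p1 :: s) ltac:(rewrite /=; lia).
by rewrite inE negb_or => /andP [p21 p2_s]; exists p1, p2; rewrite eq_sym.
Qed.

Section SymRep.
Variables (R : realType) (k : nat).
Implicit Types (A : 'M[R]_2) (p l : 'I_k.+1).

Lemma sym_repB A A' : sym_rep k (A - A') = sym_rep k A - sym_rep k A'.
Proof.
apply/matrixP => i j; rewrite !mxE.
by do 3 (case: ifP => _; first ring); rewrite subr0.
Qed.

Lemma sym_rep0 : sym_rep k (0 : 'M[R]_2) = 0.
Proof. by rewrite -(subrr (0 : 'M[R]_2)) sym_repB subrr. Qed.

Lemma sym_rep_diag A l : sym_rep k A l l = (k - l)%:R * A 0 0 + l%:R * A 1 1.
Proof. by rewrite mxE eqxx. Qed.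

Lemma sym_rep_subdiag A p l : p = l.+1 :> nat -> sym_rep k A p l = (k - l)%:R * A 1 0.
Proof. by move=> pl; rewrite mxE pl eqxx; case: ifP => [/eqP|//]; lia. Qed.

Lemma sym_rep_superdiag A p l : p.+1 = l :> nat -> sym_rep k A p l = l%:R * A 0 1.
Proof.
move=> pl; rewrite mxE -pl eqxx.
by case: ifP => [/eqP|_]; [lia | case: ifP => [/eqP|//]; lia].
Qed.

End SymRep.

Section Action.
Variables (R : realType) (k m : nat).
Implicit Types (X Y : 'M[R]_2 * 'M[R]_m) (v : Vsp R k m).
Implicit Types (i l p : 'I_k.+1) (a c q : 'I_m).
Local Notation e i a := (delta_mx i a : Vsp R k m).

Lemma actB X Y v : act (X - Y) v = act X v - act Y v.
Proof. by rewrite /act sym_repB raddfB /= mulmxBl mulmxBr opprD addrACA. Qed.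

Lemma act_deltaE X l c p q :
  act X (e l c) p q = (q == c)%:R * sym_rep k X.1 p l + (p == l)%:R * X.2 q c.
Proof.
by rewrite mxE mulmx_delta_entry delta_mulmx_entry mulrC; congr (_ + _ * _); rewrite mxE.
Qed.

Lemma act_delta_diag X l c :
  act X (e l c) l c = (k - l)%:R * X.1 0 0 + l%:R * X.1 1 1 + X.2 c c.
Proof. by rewrite act_deltaE sym_rep_diag !eqxx !mul1r. Qed.

Lemma act_delta_offdiag X p l q : p != l -> act X (e l q) p q = sym_rep k X.1 p l.
Proof. by move=> /negbTE pl; rewrite act_deltaE pl eqxx mul1r mul0r addr0. Qed.

Lemma act_delta_gl X l c p q : X.1 = 0 -> act X (e l c) p q = (p == l)%:R * X.2 q c.
Proof. by move=> X1; rewrite act_deltaE X1 sym_rep0 mxE mulr0 add0r. Qed.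

(* The coordinates (p, q) that X e_(i,a) can reach, whatever X is. *)
Definition near_delta i a p q :=
  (p == i :> nat) || (q == a) && ((p == i.+1 :> nat) || (p.+1 == i :> nat)).

Lemma act_delta_eq0 X i a p q : ~~ near_delta i a p q -> act X (e i a) p q = 0.
Proof.
rewrite /near_delta negb_or => /andP [pi far].
have /negbTE pi' : p != i by [].
rewrite act_deltaE pi' mul0r addr0.
case/nandP: far => [/negbTE -> | /norP [/negbTE pi1 /negbTE pi2]]; first by rewrite mul0r.
by rewrite mxE (negbTE pi) pi1 pi2 mulr0.
Qed.

Definition kills_coord X p q := forall l c, act X (e l c) p q = 0.

Lemma kills_coord_subdiag X p q : kills_coord X p q -> (0 < p)%N -> X.1 1 0 = 0.
Proof.
move=> Xpq p_gt0; have p_le := ltn_ord p.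
have lE : ((inord p.-1 : 'I_k.+1) : nat) = p.-1 by rewrite inordK; lia.
have := Xpq (inord p.-1) q.
rewrite act_delta_offdiag -?val_eqE /= ?lE; last by apply/eqP; lia.
rewrite (sym_rep_subdiag _ (l := inord p.-1)) lE; last by lia.
by move/eqP; rewrite mulf_eq0 pnatr_eq0 => /orP [/eqP|/eqP //]; lia.
Qed.

Lemma kills_coord_superdiag X p q : kills_coord X p q -> (p < k)%N -> X.1 0 1 = 0.
Proof.
move=> Xpq p_lt.
have lE : ((inord p.+1 : 'I_k.+1) : nat) = p.+1 by rewrite inordK.
have := Xpq (inord p.+1) q.
rewrite act_delta_offdiag -?val_eqE /= ?lE; last by apply/eqP; lia.
rewrite (sym_rep_superdiag _ (l := inord p.+1)) lE //.
by move/eqP; rewrite mulf_eq0 pnatr_eq0 => /= /eqP.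
Qed.

Lemma kills_coord_diag X p q : kills_coord X p q ->
  (k - p)%:R * X.1 0 0 + p%:R * X.1 1 1 + X.2 q q = 0.
Proof. by move/(_ p q); rewrite act_delta_diag. Qed.

Lemma sl2_eq0 (A : 'M[R]_2) :
  \tr A = 0 -> A 0 0 = A 1 1 -> A 0 1 = 0 -> A 1 0 = 0 -> A = 0.
Proof.
have -> : \tr A = A 0 0 + A 1 1.
  by rewrite /mxtrace !big_ord_recl big_ord0 addr0; congr (A _ _ + A _ _); apply: val_inj.
move=> trA diagA A01 A10.
have A00 : A 0 0 = 0 by lra.
have A11 : A 1 1 = 0 by lra.
apply/matrixP => r s; rewrite mxE.
by case: r => [[|[|//]] ?]; case: s => [[|[|//]] ?];
  [rewrite -A00 | rewrite -A01 | rewrite -A10 | rewrite -A11]; congr (A _ _); apply: val_inj.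
Qed.

(* Two killed rows p1 <> p2 of one column: the diagonal relations differ by
   (p2 - p1) (A00 - A11), and one of the rows is interior on each side. *)
Lemma kills_coord2_sl2_eq0 X p1 p2 q : \tr X.1 = 0 -> p1 != p2 ->
  kills_coord X p1 q -> kills_coord X p2 q -> X.1 = 0.
Proof.
move=> trX p12 X1 X2; have p1_le := ltn_ord p1; have p2_le := ltn_ord p2.
have p12n : (p1 : nat) != p2 by [].
apply: sl2_eq0 => //.
- have := kills_coord_diag X1; have := kills_coord_diag X2.
  rewrite !natrB; try lia.
  move=> E2 E1; have : ((p2 : nat)%:R - (p1 : nat)%:R) * (X.1 0 0 - X.1 1 1) = 0 :> R.
    by lra.
  move/eqP; rewrite mulf_eq0 subr_eq0 eqr_nat eq_sym (negbTE p12n) subr_eq.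
  by rewrite add0r => /eqP.
- case: (ltnP p1 k) => [/(kills_coord_superdiag X1) //| p1k].
  by apply: (kills_coord_superdiag X2); lia.
- case: (posnP p1) => [p10 | /(kills_coord_subdiag X1) //].
  by apply: (kills_coord_subdiag X2); lia.
Qed.

End Action.

Definition free_row (i j p : nat) := [&& p != i, p != j, p != i.+1 & p.+1 != i].

Lemma free_rows_k4 : all (fun i => all (fun j =>
   ((i == 1) && (j == 3)) || ((i == 3) && (j == 1))%N ||
   has (fun p1 => has (fun p2 => (p1 != p2) &&
      ((free_row i j p1 && free_row i j p2) || (free_row j i p1 && free_row j i p2)))
   (iota 0 5)) (iota 0 5)) (iota 0 5)) (iota 0 5).
Proof. by vm_compute. Qed.

Section FreeCoordinates.
Variables (k m : nat).
Implicit Types (i j p : 'I_k.+1) (a b q : 'I_m).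

Definition free_coord i a j b p q := ~~ near_delta i a p q && ~~ near_delta j b p q.

Definition exceptional_pair i a j b :=
  [&& k == 4, a != b & ((i == 1%N :> nat) && (j == 3%N :> nat))
                        || ((i == 3%N :> nat) && (j == 1%N :> nat))].

Lemma free_coord_other i a j b p q : q != a -> q != b ->
  free_coord i a j b p q = (p != i :> nat) && (p != j :> nat).
Proof. by move=> /negbTE qa /negbTE qb; rewrite /free_coord /near_delta qa qb !orbF. Qed.

Lemma free_coord_left i a j b p : a != b -> free_coord i a j b p a = free_row i j p.
Proof. by move=> /negbTE ab; rewrite /free_coord /near_delta /free_row eqxx ab; lia. Qed.

Lemma free_coord_right i a j b p : a != b -> free_coord i a j b p b = free_row j i p.
Proof.
by move=> ab; rewrite /free_coord /near_delta /free_row eqxx (eq_sym b a) (negbTE ab); lia.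
Qed.

Hypothesis km : (3 <= m)%N /\ (3 <= k)%N \/ m = 2%N /\ (4 <= k)%N.

Lemma exists_two_free_coords i a j b : ~~ exceptional_pair i a j b ->
  exists q p1 p2, [/\ p1 != p2, free_coord i a j b p1 q & free_coord i a j b p2 q].
Proof.
move=> nexc.
have free_col q : q != a -> q != b ->
    exists q p1 p2, [/\ p1 != p2, free_coord i a j b p1 q & free_coord i a j b p2 q].
  move=> qa qb; have [|p1 [p2 [p12 p1s p2s]]] := @exists_two_ords_notin k.+1 [:: val i; val j].
    by rewrite /=; lia.
  exists q, p1, p2; rewrite !free_coord_other //.
  by move: p1s p2s; rewrite !inE !negb_or => -> ->.
have [m3 | m2] := leqP 3 m.
  have [c] := @exists_ord_notin m [:: val a; val b] ltac:(by []).
  by rewrite !inE negb_or => /andP [ca cb]; apply: (free_col c); rewrite -val_eqE.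
have {m2} [m2 k4] : m = 2%N /\ (4 <= k)%N by case: km; lia.
have [ab | ab] := eqVneq a b.
  have [d] := @exists_ord_notin m [:: val a] ltac:(by rewrite /=; lia).
  by rewrite inE => da; apply: (free_col d); rewrite -?ab -val_eqE.
have [k5 | k4'] := ltnP 4 k.
  have [|p1 [p2 [p12 p1s p2s]]] :=
    @exists_two_ords_notin k.+1 [:: val i; val j; (val i).+1; (val i).-1].
    by rewrite /=; lia.
  exists a, p1, p2; rewrite !free_coord_left //.
  by split => //; [move: p1s | move: p2s]; rewrite !inE /free_row /=; lia.
have k4e : k = 4%N by lia.
have i5 : nat_of_ord i \in iota 0 5 by rewrite mem_iota -k4e ltn_ord.
have j5 : nat_of_ord j \in iota 0 5 by rewrite mem_iota -k4e ltn_ord.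
have /orP [exc | /hasP [p1 p1_5 /hasP [p2 p2_5 /andP [p12 free12]]]] :=
  allP (allP free_rows_k4 _ i5) _ j5.
  by move: nexc; rewrite /exceptional_pair ab exc (introT eqP k4e).
move: p1_5 p2_5; rewrite !mem_iota /= -k4e => p1_k p2_k.
have p12' : Ordinal p1_k != Ordinal p2_k by rewrite -val_eqE.
case/orP: free12 => /andP [f1 f2].
- by exists a, (Ordinal p1_k), (Ordinal p2_k); rewrite !free_coord_left.
- by exists b, (Ordinal p1_k), (Ordinal p2_k); rewrite !free_coord_right.
Qed.

End FreeCoordinates.

Section SpencerKernel.
Variables (R : realType) (k m : nat).
Hypothesis km : (3 <= m)%N /\ (3 <= k)%N \/ m = 2%N /\ (4 <= k)%N.
Variable D : Vsp R k m -> Vsp R k m -> 'M[R]_2 * 'M[R]_m.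
Hypotheses (D_hom : is_Hom2 D) (D_ker : forall v1 v2 v3, spencer2 D v1 v2 v3 = 0).
Implicit Types (i j l p : 'I_k.+1) (a b c q : 'I_m).
Local Notation e i a := (delta_mx i a : Vsp R k m).

Lemma spencer2_delta_coord i a j b l c p q :
  act (D (e i a) (e j b)) (e l c) p q =
  act (D (e i a) (e l c)) (e j b) p q - act (D (e j b) (e l c)) (e i a) p q.
Proof.
have entryE (M N P : Vsp R k m) : (- M + N - P) p q = - M p q + N p q - P p q.
  by rewrite !mxE.
have : spencer2 D (e i a) (e j b) (e l c) p q = 0 by rewrite D_ker mxE.
by rewrite /spencer2 entryE => ?; lra.
Qed.

Lemma trace_D v w : \tr (D v w).1 = 0.
Proof. by case: D_hom => _ _ /(_ v w). Qed.

Lemma D_skew v w : D v w = - D w v.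
Proof. by case: D_hom => _ /(_ v w). Qed.

Lemma kills_coord_D i a j b p q :
  free_coord i a j b p q -> kills_coord (D (e i a) (e j b)) p q.
Proof.
by case/andP => fi fj l c; rewrite spencer2_delta_coord !act_delta_eq0 // subr0.
Qed.

Lemma sl2_part_D_generic i a j b :
  ~~ exceptional_pair i a j b -> (D (e i a) (e j b)).1 = 0.
Proof.
move=> nexc; have [q [p1 [p2 [p12 f1 f2]]]] := exists_two_free_coords km nexc.
exact: kills_coord2_sl2_eq0 (trace_D _ _) p12 (kills_coord_D f1) (kills_coord_D f2).
Qed.

(* Rows 4 of column a and 0 of column b are free; the instance
   (l, c) = (p, q) = (0, a) of the equation supplies the missing relation. *)
Lemma sl2_part_D_13 i a j b : k = 4%N -> a != b -> i = 1%N :> nat -> j = 3%N :> nat ->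
  (D (e i a) (e j b)).1 = 0.
Proof.
move=> k4 ab i1 j3; set X := D (e i a) (e j b).
pose r4 : 'I_k.+1 := inord 4; pose r0 : 'I_k.+1 := inord 0.
have r4E : r4 = 4%N :> nat by rewrite inordK // k4.
have r0E : r0 = 0%N :> nat by rewrite inordK.
have X4 : kills_coord X r4 a.
  by apply: kills_coord_D; rewrite free_coord_left // /free_row r4E i1 j3.
have X0 : kills_coord X r0 b.
  by apply: kills_coord_D; rewrite free_coord_right // /free_row r0E i1 j3.
have X10 := kills_coord_subdiag X4 ltac:(by rewrite r4E).
have X01 := kills_coord_superdiag X0 ltac:(by rewrite r0E k4).
have diag4 := kills_coord_diag X4; rewrite r4E k4 subnn in diag4.
have Y1 : (D (e j b) (e r0 a)).1 = 0.
  by apply: sl2_part_D_generic; rewrite /exceptional_pair j3 r0E !andbF.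
have := spencer2_delta_coord i a j b r0 a r0 a.
have kR : k%:R = 4 :> R by rewrite k4.
rewrite act_delta_diag r0E subn0 kR (act_delta_gl _ _ _ _ Y1) act_delta_eq0; last first.
  by rewrite /near_delta (negbTE ab) j3 r0E.
rewrite -val_eqE /= r0E i1 /= mul0r => diag0.
apply: sl2_eq0 => //; first exact: trace_D.
by rewrite /X in diag4 *; lra.
Qed.

Lemma sl2_part_D i a j b : (D (e i a) (e j b)).1 = 0.
Proof.
have [exc | nexc] := boolP (exceptional_pair i a j b); last exact: sl2_part_D_generic.
case/and3P: exc => /eqP k4 ab /orP [] /andP [/eqP i1 /eqP j3].
  exact: sl2_part_D_13.
by rewrite D_skew /= (sl2_part_D_13 k4 _ j3 i1) ?oppr0 // eq_sym.
Qed.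

Lemma gl_part_D i a j b : (D (e i a) (e j b)).2 = 0.
Proof.
apply/matrixP => q c; rewrite [RHS]mxE.
have [l] := @exists_ord_notin k.+1 [:: val i; val j] ltac:(by rewrite /=; case: km; lia).
rewrite !inE negb_or => /andP [li lj].
have := spencer2_delta_coord i a j b l c l q.
rewrite !act_delta_gl ?sl2_part_D // eqxx -!val_eqE (negbTE li) (negbTE lj).
by rewrite !mul0r subr0 mul1r.
Qed.

Lemma spencer2_kernel v w : D v w = 0.
Proof.
apply: skew_bilinear_eq0 v w => [c v1 v2 w|v w|i a j b]; first by case: D_hom.
  exact: D_skew.
by rewrite [D _ _]surjective_pairing sl2_part_D gl_part_D.
Qed.

End SpencerKernel.

Section SpencerLinear.
Variables (R : realType) (k m : nat).
Variables phi psi : Vsp R k m -> Vsp R k m -> 'M[R]_2 * 'M[R]_m.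

Lemma spencer2B v1 v2 v3 :
  spencer2 (fun v w => phi v w - psi v w) v1 v2 v3 =
  spencer2 phi v1 v2 v3 - spencer2 psi v1 v2 v3.
Proof. by rewrite /spencer2 !actB; apply/matrixP => p q; rewrite !mxE; ring. Qed.

Lemma is_Hom2B : is_Hom2 phi -> is_Hom2 psi -> is_Hom2 (fun v w => phi v w - psi v w).
Proof.
case=> phi_lin phi_skew phi_a [psi_lin psi_skew psi_a]; split => [c v1 v2 w|v w|v w].
- by rewrite phi_lin psi_lin scalerBr opprD addrACA; reflexivity.
- by rewrite phi_skew psi_skew opprB opprK addrC; reflexivity.
- by rewrite /in_a /= linearB /= phi_a psi_a subrr.
Qed.

End SpencerLinear.

Theorem lemma4 (R : realType) (k m : nat) :
  ((3 <= m)%N /\ (3 <= k)%N \/ m = 2%N /\ (4 <= k)%N) ->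
  forall phi psi : Vsp R k m -> Vsp R k m -> 'M[R]_2 * 'M[R]_m,
    is_Hom2 phi -> is_Hom2 psi ->
    (forall v1 v2 v3 : Vsp R k m, spencer2 phi v1 v2 v3 = spencer2 psi v1 v2 v3) ->
    forall v w : Vsp R k m, phi v w = psi v w.
Proof.
move=> km phi psi phi_hom psi_hom same_spencer v w.
apply/eqP; rewrite -subr_eq0; apply/eqP.
apply: (spencer2_kernel km (is_Hom2B phi_hom psi_hom)) => v1 v2 v3.
by rewrite spencer2B same_spencer subrr.
Qed.
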